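(* Let $\Gamma=\mathsf{PSL}_2(\mathbb{Z})=\langle U,S\mid U^3,S^2\rangle$, with $U$ of order $3$ and $S$ of order $2$. Let $\mathcal{W}$ be the set of nonempty words in the alphabet $\{U,S\}$ that are equal to the identity in $\Gamma$ and contain no factor $SS$. Below, $B$ denotes an arbitrary nonempty word over $\{U,S\}$, and for $n,m\ge 0$ each function counts the words in $\mathcal{W}$ having exactly $n$ letters $U$ and $m$ letters $S$ and having the indicated form: - $a(n,m)$: words of the form $SUBUS$; - $b(n,m)$: words of the form $U^\alpha SBSU^\beta$ with $\alpha,\beta>0$, $\alpha+\beta\equiv0\pmod 3$, or of the form $U^\gamma$ with $\gamma>0$, $\gamma\equiv 0\pmod 3$; - $c(n,m)$: words of the form $U^\alpha SBS$ or $SBSU^\alpha$ with $\alpha>0$, $\alpha\equiv0\pmod3$; - $d(n,m)$: words of the form $U^\alpha SBSU^\beta$ with $\alpha,\beta>0$, $\alpha+\beta\equiv 2\pmod 3$; - $e(n,m)$: words of the form $U^\alpha SBSU^\beta$ with $\alpha,\beta>0$, $\alpha+\beta\equiv1\pmod3$; - $f(n,m)$: words of the form $SBSU^\alpha$ or $U^\alpha SBS$ with $\alpha\equiv1\pmod3$; - $g(n,m)$: words of the form $SBSU^\alpha$ or $U^\alpha SBS$ with $\alpha\equiv2\pmod3$; - $\mathfrak d(n,m)$: words of the form $USBSU$; - $\mathfrak f(n,m)$: words of the form $SBSU$. All these functions are taken to be $0$ if an argument is negative. Then for all $n,m\ge0$: $$a(3n,2m)=b(3n,2m-2)+d(3n,2m-2)+e(3n,2m-2),$$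 $$b(3n,2m)=\sum_{k\ge1}(3k-1)\,a(3n-3k,2m)\ \text{ for } m\ge1,\qquad b(3n,0)=1\ \text{ for } n>0,$$ $$c(3n,2m)=2\sum_{k\ge1}a(3n-3k,2m),$$ $$d(3n,2m)=\sum_{k\ge0}(3k+1)\,\mathfrak d(3n-3k,2m),$$ $$e(3n,2m)=\sum_{k\ge1}3k\,\mathfrak f(3n-3k,2m),$$ $$f(3n,2m)=2\sum_{k\ge0}\mathfrak f(3n-3k,2m),$$ $$g(3n,2m)=2\sum_{k\ge0}\mathfrak d(3n-3k,2m).$$
   Context: Words are finite sequences over $\{U,S\}$ read as products in $\Gamma$; exponents $U^\alpha$ denote $\alpha$ consecutive letters $U$. *)

From HB Require Import structures.
From mathcomp Require Import all_boot all_order all_algebra zify.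
Set Implicit Arguments. Unset Strict Implicit. Unset Printing Implicit Defensive.
Import Order.TTheory GRing.Theory Num.Theory.

Inductive letter := LU | LS.

Definition letter_to_bool (l : letter) : bool := if l is LU then true else false.
Definition bool_to_letter (b : bool) : letter := if b then LU else LS.
Lemma letter_to_boolK : cancel letter_to_bool bool_to_letter.
Proof. by case. Qed.
HB.instance Definition _ := Finite.copy letter (can_type letter_to_boolK).

Definition word := seq letter.

(** PSL_2(Z) realised through SL_2(Z): U = [[0,-1],[1,1]] (order 3 in PSL_2),
    S = [[0,-1],[1,0]] (order 2 in PSL_2).  A word is the identity of
    Gamma = PSL_2(Z) iff its matrix product is +I or -I. *)
Local Open Scope ring_scope.
Definition Umx : 'M[int]_2 :=
  \matrix_(i < 2, j < 2) (if (i : nat) == 0%N then (if (j : nat) == 0%N then 0 else -1) else 1).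
Definition Smx : 'M[int]_2 :=
  \matrix_(i < 2, j < 2) (if i == j then 0 else if (i : nat) == 0%N then -1 else 1).
Definition letter_mx (l : letter) : 'M[int]_2 := if l is LU then Umx else Smx.
Definition eval_word (w : word) : 'M[int]_2 := foldr (fun l M => letter_mx l *m M) 1%:M w.
Definition is_identity (w : word) : bool := (eval_word w == 1%:M) || (eval_word w == - 1%:M).
Local Close Scope ring_scope.

Fixpoint noSS (w : word) : bool :=
  match w with
  | LS :: (LS :: _) as w' => false
  | _ :: w' => noSS w'
  | [::] => true
  end.

Definition inW (w : word) : bool := [&& w != [::], is_identity w & noSS w].

Definition Upow (k : nat) : word := nseq k LU.

(** [framed p q w] : w = p ++ B ++ q for some NONEMPTY word B (see framedP). *)
Definition framed (p q w : word) : bool :=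
  [&& size p + size q < size w, take (size p) w == p & drop (size w - size q) w == q].

Lemma framedP p q w :
  reflect (exists B : word, B <> [::] /\ w = p ++ B ++ q) (framed p q w).
Proof.
apply: (iffP idP).
- case/and3P=> hs /eqP hp /eqP hq.
  exists (take (size w - size q - size p) (drop (size p) w)); split.
    move=> h; have := congr1 size h; rewrite size_take size_drop.
    by case: ifP => _ /eqP; rewrite ?subn_eq0 /=; lia.
  rewrite -{1}(cat_take_drop (size p) w) hp; congr (_ ++ _).
  rewrite -{1}(cat_take_drop (size w - size q - size p) (drop (size p) w)).
  congr (_ ++ _); rewrite drop_drop -[in RHS]hq; congr drop; lia.
- case=> B [hB ->]; apply/and3P; split.
  + by rewrite !size_cat; case: B hB => // _ B _ /=; lia.
  + by rewrite take_size_cat.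
  + rewrite catA drop_size_cat // !size_cat; lia.
Qed.

Definition form_a w := framed [:: LS; LU] [:: LU; LS] w.
Definition form_UBU (cond : nat -> nat -> bool) w :=
  [exists a : 'I_(size w).+1, [exists b : 'I_(size w).+1,
     [&& 0 < a, 0 < b, cond a b & framed (Upow a ++ [:: LS]) (LS :: Upow b) w]]].
Definition form_b w :=
  form_UBU (fun a b => (a + b) %% 3 == 0) w
  || [exists g : 'I_(size w).+1, [&& 0 < g, g %% 3 == 0 & w == Upow g]].
Definition form_one_side (cond : nat -> bool) w :=
  [exists a : 'I_(size w).+1,
     cond a && (framed (Upow a ++ [:: LS]) [:: LS] w || framed [:: LS] (LS :: Upow a) w)].
Definition form_c w := form_one_side (fun a => (0 < a) && (a %% 3 == 0)) w.
Definition form_d w := form_UBU (fun a b => (a + b) %% 3 == 2) w.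
Definition form_e w := form_UBU (fun a b => (a + b) %% 3 == 1) w.
Definition form_f w := form_one_side (fun a => a %% 3 == 1) w.
Definition form_g w := form_one_side (fun a => a %% 3 == 2) w.
Definition form_frak_d w := framed [:: LU; LS] [:: LS; LU] w.
Definition form_frak_f w := framed [:: LS] [:: LS; LU] w.

Definition cnt (form : word -> bool) (n m : nat) : nat :=
  #|[set t : (n + m).-tuple letter |
      [&& inW t, count (pred1 LU) t == n, count (pred1 LS) t == m & form t]]|.

Definition ext (f : nat -> nat -> nat) (i j : int) : nat :=
  match i, j with Posz n, Posz m => f n m | _, _ => 0 end.

Definition a_ := ext (cnt form_a).
Definition b_ := ext (cnt form_b).
Definition c_ := ext (cnt form_c).
Definition d_ := ext (cnt form_d).
Definition e_ := ext (cnt form_e).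
Definition f_ := ext (cnt form_f).
Definition g_ := ext (cnt form_g).
Definition fd_ := ext (cnt form_frak_d).
Definition ff_ := ext (cnt form_frak_f).

From HB Require Import structures.
From mathcomp Require Import all_boot all_order all_algebra zify.
Import Order.TTheory GRing.Theory Num.Theory.
Set Implicit Arguments. Unset Strict Implicit. Unset Printing Implicit Defensive.

(* A word of W with at least two letters S is U^a S x S U^b, where a and b are
   the lengths of its leading and trailing runs of U, and each of the nine
   forms is a condition on (a, b).  Membership in W is invariant under
   conjugation, so moving a U from the front to the back is a bijection and
   the number of words of W with given letter counts and runs (a, b) depends
   only on a + b; since U^3 = -I, it is also unchanged when three letters U
   are added to both a + b and the U-count.  Each count is thus a sum of one
   quantity over the runs (a, b) allowed by the form, and grouping the pairs
   with a + b = 3k + r yields the sums.  The recurrence for a comes from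
   conjugating by S, which maps the words S U x U S of W onto the words U x U
   of W, split according to (a + b) mod 3. *)

(** * Counting words of W *)

Definition words (L : nat) : seq word := [seq val t | t <- enum {: L.-tuple letter}].

Lemma words_uniq L : uniq (words L).
Proof. by rewrite map_inj_uniq ?enum_uniq //; apply: val_inj. Qed.

Lemma mem_words L w : (w \in words L) = (size w == L).
Proof.
apply/mapP/eqP => [[t _ ->]|w_L]; first exact: size_tuple.
by exists (Tuple (introT eqP w_L)); rewrite ?mem_enum.
Qed.

Lemma size_count_LU_LS (w : word) : size w = count_mem LU w + count_mem LS w.
Proof. by rewrite -(count_predC (pred1 LU)); congr (_ + _); apply: eq_count; case. Qed.

Definition W_nm (n m : nat) (w : word) :=
  [&& inW w, count_mem LU w == n & count_mem LS w == m].

Lemma size_W_nm n m w : W_nm n m w -> size w = n + m.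
Proof. by case/and3P=> _ /eqP <- /eqP <-; apply: size_count_LU_LS. Qed.

Lemma W_nmP n m w : W_nm n m w ->
  [/\ w != [::], is_identity w, noSS w, count_mem LU w = n & count_mem LS w = m].
Proof. by case/and3P=> /and3P[? ? ?] /eqP ? /eqP ?. Qed.

Lemma W_nm_memS n m w : W_nm n m w -> 0 < m -> LS \in w.
Proof. by case/and3P=> _ _ /eqP <-; rewrite -has_pred1 has_count. Qed.

Lemma cntE form n m : cnt form n m = count (fun w => W_nm n m w && form w) (words (n + m)).
Proof.
rewrite /cnt /words count_map cardE /enum_mem count_filter size_filter.
by apply: eq_count => t; rewrite !inE andbT /W_nm -!andbA.
Qed.

Lemma eq_cnt (form1 form2 : word -> bool) n m :
  (forall w, W_nm n m w -> form1 w = form2 w) -> cnt form1 n m = cnt form2 n m.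
Proof.
by move=> eq12; rewrite !cntE; apply: eq_count => w; case: (boolP (W_nm n m w)) => // /eq12 ->.
Qed.

Lemma cnt_predU (form1 form2 : word -> bool) n m :
  (forall w, W_nm n m w -> ~~ (form1 w && form2 w)) ->
  cnt (fun w => form1 w || form2 w) n m = cnt form1 n m + cnt form2 n m.
Proof.
move=> disj; rewrite !cntE -count_predUI (@eq_count _ (predI _ _) pred0) ?count_pred0 ?addn0.
  by apply: eq_count => w /=; rewrite andb_orr.
by move=> w /=; case: (boolP (W_nm n m w)) => //= /disj /negbTE.
Qed.

Lemma cnt_partition (form : word -> bool) (f : word -> nat) lo hi n m :
  (forall w, W_nm n m w -> form w -> lo <= f w < hi) ->
  cnt form n m = \sum_(lo <= k < hi) cnt (fun w => form w && (f w == k)) n m.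
Proof.
move=> f_range; rewrite cntE; under eq_bigr do rewrite cntE.
elim: (words _) => [|w s IH] /=; first by rewrite big1.
rewrite big_split /= -IH; congr (_ + _).
have [/andP[wW fw]|Pw] := boolP (W_nm n m w && form w); last first.
  by rewrite big1 // => k _; rewrite andbA (negbTE Pw).
rewrite (bigD1_seq (f w)) ?mem_index_iota ?f_range ?iota_uniq //= wW fw eqxx big1 //.
by move=> k /negbTE; rewrite eq_sym => ->; rewrite andbF.
Qed.

Lemma cnt_bij (form1 form2 : word -> bool) n1 m1 n2 m2 (h : word -> word) :
  injective h ->
  (forall v, W_nm n1 m1 v -> form1 v -> W_nm n2 m2 (h v) && form2 (h v)) ->
  (forall w, W_nm n2 m2 w -> form2 w -> exists2 v, W_nm n1 m1 v && form1 v & w = h v) ->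
  cnt form1 n1 m1 = cnt form2 n2 m2.
Proof.
move=> h_inj h_into h_onto; rewrite !cntE -!size_filter.
have perm_h : perm_eq (map h (filter (fun v => W_nm n1 m1 v && form1 v) (words (n1 + m1))))
                      (filter (fun w => W_nm n2 m2 w && form2 w) (words (n2 + m2))).
  apply: uniq_perm; rewrite ?(map_inj_uniq h_inj) ?filter_uniq ?words_uniq // => w.
  rewrite mem_filter mem_words; apply/mapP/idP => [[v]|/andP[/andP[w2 f2w] _]].
    rewrite mem_filter => /andP[/andP[v1 f1v] _] ->.
    by have /andP[hv2 f2hv] := h_into v v1 f1v; rewrite hv2 f2hv (size_W_nm hv2) /=.
  have [v /andP[v1 f1v] ->] := h_onto w w2 f2w; exists v => //.
  by rewrite mem_filter v1 f1v mem_words (size_W_nm v1) /=.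
by rewrite -(perm_size perm_h) size_map.
Qed.

Lemma W_nm_S_free n w : W_nm n 0 w = (w == Upow n) && inW w.
Proof.
apply/idP/andP => [/and3P[wW /eqP w_n /eqP w_0]|[/eqP -> uW]]; last first.
  by rewrite /W_nm uW !count_nseq /= mul1n mul0n !eqxx.
have size_w : size w = n by rewrite size_count_LU_LS w_0 addn0.
split=> //; rewrite /Upow -size_w; apply/eqP/all_pred1P.
by rewrite all_count size_w -w_n; apply/eqP/eq_count; case.
Qed.

Lemma cnt_S_free (form : word -> bool) n : cnt form n 0 = inW (Upow n) && form (Upow n).
Proof.
rewrite cntE addn0 (@eq_count _ _ (fun w => (w == Upow n) && (inW (Upow n) && form (Upow n)))).
  case: (inW _ && _); last by rewrite (@eq_count _ _ pred0) ?count_pred0 // => w; rewrite andbF.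
  rewrite (@eq_count _ _ (pred1 (Upow n))) => [|w]; last by rewrite andbT.
  by rewrite count_uniq_mem ?words_uniq // mem_words size_nseq eqxx.
by move=> w; rewrite W_nm_S_free -andbA; case: eqP => // ->.
Qed.

Lemma cnt_eq0_S_free (form : word -> bool) n : form (Upow n) = false -> cnt form n 0 = 0.
Proof. by rewrite cnt_S_free => ->; rewrite andbF. Qed.

(** * The identity of PSL_2(Z) *)

Lemma eval_word_cat x y : eval_word (x ++ y) = (eval_word x *m eval_word y)%R.
Proof. by elim: x => [|l x IH] /=; rewrite ?mul1mx // IH mulmxA. Qed.

Lemma is_identity_rot x y : is_identity (x ++ y) = is_identity (y ++ x).
Proof.
suff rot_id u v : is_identity (u ++ v) -> is_identity (v ++ u) by apply/idP/idP; apply: rot_id.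
rewrite /is_identity !eval_word_cat => /orP[/eqP/mulmx1C -> | /eqP uv_N1]; first by rewrite eqxx.
have /mulmx1C : (eval_word u *m - eval_word v = 1%:M)%R by rewrite mulmxN uv_N1 opprK.
by rewrite mulNmx => /(canRL (@opprK _)) ->; rewrite eqxx orbT.
Qed.

Lemma is_identity_catN1 v x : eval_word v = (- 1%:M)%R -> is_identity (v ++ x) = is_identity x.
Proof.
by move=> v_N1; rewrite /is_identity eval_word_cat v_N1 mulNmx mul1mx eqr_opp eqr_oppLR orbC.
Qed.

Ltac eval_2x2 := rewrite /eval_word /= ?mulmx1;
  apply/matrixP => -[[|[|//]] ?] -[[|[|//]] ?]; rewrite !(mxE, big_ord_recl, big_ord0).

Lemma is_identity_U3k k x : is_identity (Upow (3 * k) ++ x) = is_identity x.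
Proof.
elim: k => // k IH; rewrite mulnS /Upow nseqD -catA is_identity_catN1 //.
by eval_2x2.
Qed.

Lemma is_identity_Upow_mod a x : is_identity (Upow a ++ x) = is_identity (Upow (a %% 3) ++ x).
Proof. by rewrite {1}(divn_eq a 3) /Upow nseqD -catA mulnC is_identity_U3k. Qed.

Lemma is_identity_SxS x : is_identity (LS :: x ++ [:: LS]) = is_identity x.
Proof.
rewrite -cat1s is_identity_rot -catA is_identity_rot is_identity_catN1 //.
by eval_2x2.
Qed.

Lemma is_identity_Upow g : is_identity (Upow g) = (g %% 3 == 0).
Proof.
rewrite -[Upow g]cats0 is_identity_Upow_mod cats0.
have : g %% 3 < 3 by rewrite ltn_pmod.
case: (g %% 3) => [|[|[|r]]] // _; first by rewrite /is_identity /= eqxx.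
all: apply: negbTE; apply/norP; split; apply/eqP => /matrixP/(_ ord_max ord0).
all: by rewrite /eval_word /= ?mulmx1 !(mxE, big_ord_recl, big_ord0).
Qed.

Lemma SUS_SUUS_not_identity : ~~ is_identity [:: LS; LU; LS] && ~~ is_identity [:: LS; LU; LU; LS].
Proof.
rewrite (is_identity_SxS [:: LU]) (is_identity_SxS [:: LU; LU]).
by rewrite -[[:: LU]]/(Upow 1) -[[:: LU; LU]]/(Upow 2) !is_identity_Upow.
Qed.

(** * Runs of U at both ends *)

Definition lead_U (w : word) : nat := find (pred1 LS) w.
Definition trail_U (w : word) : nat := lead_U (rev w).
Definition U_runs (a b : nat) (w : word) : bool := (lead_U w == a) && (trail_U w == b).

Lemma lead_U_cat x y : LS \in x -> lead_U (x ++ y) = lead_U x.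
Proof. by rewrite /lead_U find_cat has_pred1 => ->. Qed.

Lemma trail_U_cat x y : LS \in y -> trail_U (x ++ y) = trail_U y.
Proof. by rewrite /trail_U rev_cat -mem_rev; apply: lead_U_cat. Qed.

Lemma lead_U_Upow_cat a x : lead_U (Upow a ++ x) = a + lead_U x.
Proof. by elim: a => //= a ->. Qed.

Lemma trail_U_cat_Upow x b : trail_U (x ++ Upow b) = trail_U x + b.
Proof. by rewrite /trail_U rev_cat rev_nseq lead_U_Upow_cat addnC. Qed.

Lemma lead_U_Upow a : lead_U (Upow a) = a.
Proof. by rewrite -[Upow a]cats0 lead_U_Upow_cat addn0. Qed.

Lemma trail_U_Upow a : trail_U (Upow a) = a.
Proof. by rewrite -[Upow a]cat0s trail_U_cat_Upow. Qed.

Lemma lead_U_le_count w : lead_U w <= count_mem LU w.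
Proof. by elim: w => //= -[] w. Qed.

Lemma trail_U_le_count w : trail_U w <= count_mem LU w.
Proof. by rewrite /trail_U -count_rev lead_U_le_count. Qed.

Lemma lead_UP w : LS \in w -> exists x, w = Upow (lead_U w) ++ LS :: x.
Proof.
elim: w => //= -[] w IH; last by exists w.
by rewrite in_cons => /IH[x {1}->]; exists x.
Qed.

Lemma trail_UP w : LS \in w -> exists y, w = y ++ LS :: Upow (trail_U w).
Proof.
rewrite -mem_rev => /lead_UP[x e]; exists (rev x).
by rewrite -[LHS]revK e rev_cat rev_cons rev_nseq cat_rcons.
Qed.

Lemma lead_trail_U_le_count w : LS \in w -> lead_U w + trail_U w <= count_mem LU w.
Proof.
move=> /lead_UP[x ->]; rewrite trail_U_cat ?mem_head // lead_U_Upow_cat addn0.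
by rewrite count_cat count_nseq /= mul1n leq_add2l trail_U_le_count.
Qed.

Lemma noSS_cat_U x y : noSS (x ++ LU :: y) = noSS x && noSS y.
Proof. by elim: x => [|[] [|[] x] IH] //=; rewrite IH. Qed.

Lemma noSS_Upow_cat a x : noSS (Upow a ++ x) = noSS x.
Proof. by elim: a. Qed.

Lemma noSS_cat_Upow x b : noSS (x ++ Upow b) = noSS x.
Proof.
case: b => [|b]; first by rewrite cats0.
by rewrite -[Upow b.+1]/(LU :: Upow b) noSS_cat_U -[Upow b]cats0 noSS_Upow_cat andbT.
Qed.

Lemma noSS_cat_SS x y : noSS (x ++ LS :: LS :: y) = false.
Proof. by elim: x => [|[] [|[] x] IH] //=. Qed.

Lemma inW_Upow n : inW (Upow n) = (0 < n) && (n %% 3 == 0).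
Proof. by rewrite /inW is_identity_Upow -[Upow n]cats0 noSS_Upow_cat cats0 andbT; case: n. Qed.

Lemma U_runs_Upow_S a x b : U_runs a b (Upow a ++ LS :: x ++ LS :: Upow b).
Proof.
rewrite /U_runs lead_U_Upow_cat addn0 -cat_cons catA.
by rewrite trail_U_cat ?mem_head // -[LS :: _]cat1s trail_U_cat_Upow !eqxx.
Qed.

Lemma U_runs_decomp w : noSS w -> 1 < count_mem LS w ->
  exists2 x, x != [::] & w = Upow (lead_U w) ++ LS :: x ++ LS :: Upow (trail_U w).
Proof.
move=> w_noSS w_S2; have w_S : LS \in w by rewrite -has_pred1 has_count ltnW.
have [x' ew] := lead_UP w_S.
have x'_S : LS \in x'.
  by rewrite -has_pred1 has_count; move: w_S2; rewrite ew count_cat count_nseq /=.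
have [x ex'] := trail_UP x'_S.
have trail_w : trail_U w = trail_U x' by rewrite ew -cat1s catA trail_U_cat.
exists x; last by rewrite {1}ew {1}ex' trail_w.
by apply/eqP => x_nil; move: w_noSS; rewrite ew ex' x_nil /= noSS_Upow_cat.
Qed.

Lemma framed_U_runs a b w : noSS w -> 1 < count_mem LS w ->
  framed (Upow a ++ [:: LS]) (LS :: Upow b) w = U_runs a b w.
Proof.
move=> w_noSS w_S2; apply/framedP/idP => [[x [_ ->]]|/andP[/eqP <- /eqP <-]].
  by rewrite -catA; apply: U_runs_Upow_S.
by have [x /eqP x_nil ew] := U_runs_decomp w_noSS w_S2; exists x; rewrite -catA.
Qed.

Lemma lead_U_le_size w : lead_U w <= size w.
Proof. exact: find_size. Qed.

Lemma trail_U_le_size w : trail_U w <= size w.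
Proof. by rewrite -size_rev; apply: find_size. Qed.

Lemma framed_Upow p q n : LS \in p -> framed p q (Upow n) = false.
Proof.
move=> p_S; apply/negbTE/negP => /framedP[B [_ e]].
by have /nseqP[] : LS \in Upow n by rewrite e mem_cat p_S.
Qed.

Definition form_UxU (w : word) : bool := framed [:: LU] [:: LU] w.

Section FormsByRuns.

Variable w : word.
Hypotheses (w_noSS : noSS w) (w_S : 1 < count_mem LS w).

Lemma form_UBU_runs (cond : nat -> nat -> bool) :
  form_UBU cond w = [&& 0 < lead_U w, 0 < trail_U w & cond (lead_U w) (trail_U w)].
Proof.
apply/existsP/and3P => [[a /existsP[b /and4P[a_gt0 b_gt0 cab]]]|[l_gt0 t_gt0 c_lt]].
  by rewrite framed_U_runs // => /andP[/eqP-> /eqP->].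
exists (inord (lead_U w)); apply/existsP; exists (inord (trail_U w)).
rewrite !inordK ?ltnS ?lead_U_le_size ?trail_U_le_size // l_gt0 t_gt0 c_lt.
by rewrite framed_U_runs // /U_runs !eqxx.
Qed.

Lemma form_one_side_runs (cond : nat -> bool) :
  form_one_side cond w =
    (cond (lead_U w) && (trail_U w == 0)) || ((lead_U w == 0) && cond (trail_U w)).
Proof.
apply/existsP/idP => [[a /andP[ca]]|].
  rewrite (framed_U_runs a 0) // (framed_U_runs 0 a) //.
  by case/orP=> /andP[/eqP-> /eqP->]; rewrite ca ?eqxx ?orbT.
case/orP=> [/andP[c_lead /eqP trail0]|/andP[/eqP lead0 c_trail]].
  exists (inord (lead_U w)); rewrite inordK ?ltnS ?lead_U_le_size // c_lead.
  by rewrite (framed_U_runs _ 0) // /U_runs trail0 !eqxx.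
exists (inord (trail_U w)); rewrite inordK ?ltnS ?trail_U_le_size // c_trail.
by rewrite (framed_U_runs 0) // /U_runs lead0 !eqxx orbT.
Qed.

Lemma form_frak_d_runs : form_frak_d w = U_runs 1 1 w.
Proof. exact: (framed_U_runs 1 1). Qed.

Lemma form_frak_f_runs : form_frak_f w = U_runs 0 1 w.
Proof. exact: (framed_U_runs 0 1). Qed.

Lemma form_a_runs : is_identity w -> form_a w = U_runs 0 0 w.
Proof.
move=> w_id; apply/framedP/idP => [[B [_ ->]]|/andP[/eqP lead0 /eqP trail0]].
  by rewrite /U_runs catA trail_U_cat.
have [x x_nil ew] := U_runs_decomp w_noSS w_S; rewrite lead0 trail0 /= in ew.
move: w_noSS w_id; rewrite {}ew; case: x x_nil => [|[] x1] // _ noSS_x id_x.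
have [not_SUS not_SUUS] := andP SUS_SUUS_not_identity.
case/lastP: x1 noSS_x id_x => [|x2 []] noSS_x id_x; first by rewrite id_x in not_SUS.
  case: x2 noSS_x id_x => [|l x2] _ id_x; first by rewrite id_x in not_SUUS.
  by exists (l :: x2); split=> //; rewrite -cats1 /= -catA.
by move: noSS_x; rewrite -cats1 /= -catA noSS_cat_SS.
Qed.

Lemma form_UxU_runs : form_UxU w = (0 < lead_U w) && (0 < trail_U w).
Proof.
apply/framedP/andP => [[B [_ ->]]|[]].
  by split=> //; rewrite catA -[[:: LU] in X in _ ++ X]/(Upow 1) trail_U_cat_Upow addn1.
have [x _] := U_runs_decomp w_noSS w_S.
case: (lead_U w) => [|a]; case: (trail_U w) => [|b] // ew _ _; rewrite ew.
exists (Upow a ++ LS :: x ++ LS :: Upow b).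
split; first by case: (Upow a).
have Upow_Sr : Upow b.+1 = Upow b ++ [:: LU] by rewrite -addn1 /Upow nseqD.
by rewrite Upow_Sr /= -catA /= -catA.
Qed.

End FormsByRuns.

Lemma form_UBU_Upow cond n : form_UBU cond (Upow n) = false.
Proof.
apply/negbTE/existsPn => a; apply/existsPn => b.
by rewrite framed_Upow ?andbF // mem_cat mem_head orbT.
Qed.

Lemma form_b_UBU w : LS \in w -> form_b w = form_UBU (fun a b => (a + b) %% 3 == 0) w.
Proof.
move=> w_S; rewrite /form_b (_ : [exists _, _] = false) ?orbF //.
apply/negbTE/existsPn => g; apply/negP => /and3P[_ _ /eqP ew].
by move: w_S; rewrite ew => /nseqP[].
Qed.

Lemma form_b_Upow n : form_b (Upow n) = (0 < n) && (n %% 3 == 0).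
Proof.
rewrite /form_b form_UBU_Upow /=; apply/existsP/andP => [[[g _] /and3P[/= g0 g3 /eqP e]]|[n0 n3]].
  by have := congr1 size e; rewrite !size_nseq => ->.
by exists (inord n); rewrite inordK ?size_nseq // n0 n3 eqxx.
Qed.

Lemma form_UxU_Upow n : form_UxU (Upow n) = (2 < n).
Proof.
apply/framedP/idP => [[B [B_nil e]]|n_gt2].
  have : size B != 0 by rewrite size_eq0; apply/eqP.
  by have := congr1 size e; rewrite size_nseq !size_cat /= => ->; lia.
have -> : n = (n - 3).+3 by lia.
exists (Upow (n - 3).+1); split=> //.
by rewrite /= -[[:: LU]]/(Upow 1) -nseqD addn1.
Qed.

Lemma form_one_side_Upow cond n : form_one_side cond (Upow n) = false.
Proof.
apply/negbTE/existsPn => a.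
by rewrite !framed_Upow ?andbF // ?mem_cat mem_head ?orbT.
Qed.

(** * Counting by runs *)

Lemma W_nm_rot n m w : W_nm n m (LU :: w) = W_nm n m (rcons w LU).
Proof.
rewrite /W_nm /inW -cats1 -cat1s is_identity_rot -[[:: LU]]/(Upow 1) noSS_cat_Upow noSS_Upow_cat.
by rewrite !count_cat !(addnC (count _ (Upow 1))) -!size_eq0 !size_cat addnC.
Qed.

Lemma U_runs_rot a b w : LS \in w -> U_runs a.+1 b (LU :: w) = U_runs a b.+1 (rcons w LU).
Proof.
move=> w_S; rewrite /U_runs -cats1 -[[:: LU]]/(Upow 1) lead_U_cat // trail_U_cat_Upow addn1.
by rewrite -cat1s trail_U_cat.
Qed.

(* Conjugation by U moves a letter U from the front of a word to its back. *)
Lemma cnt_U_runs_rot a b n m : 0 < m -> cnt (U_runs a.+1 b) n m = cnt (U_runs a b.+1) n m.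
Proof.
move=> m_gt0; apply: (@cnt_bij _ _ _ _ _ _ (rot 1) (@rot_inj _ _)).
  move=> [|[] v] vW //; have v_S := W_nm_memS vW m_gt0.
  by rewrite rot1_cons -W_nm_rot vW -U_runs_rot.
move=> w wW; have w_S := W_nm_memS wW m_gt0.
case/lastP: w wW w_S => [//|w []] wW w_S.
  have v_S : LS \in w by move: w_S; rewrite mem_rcons.
  by exists (LU :: w); rewrite ?rot1_cons // W_nm_rot wW U_runs_rot.
by rewrite /U_runs /trail_U rev_rcons andbF.
Qed.

Lemma cnt_U_runs_lead a b n m : 0 < m -> cnt (U_runs a b) n m = cnt (U_runs 0 (a + b)) n m.
Proof.
by move=> m_gt0; elim: a b => // a IH b; rewrite cnt_U_runs_rot // IH addSnnS.
Qed.

Lemma W_nm_cat_U3k n m k v : LS \in v ->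
  W_nm (n + 3 * k) m (v ++ Upow (3 * k)) = W_nm n m v.
Proof.
move=> v_S; rewrite /W_nm /inW is_identity_rot is_identity_U3k noSS_cat_Upow.
have [-> ->] : (v ++ Upow (3 * k) != [::]) /\ (v != [::]) by case: v v_S.
by rewrite !count_cat !count_nseq /= mul1n mul0n addn0 eqn_add2r.
Qed.

Lemma U_runs_cat_Upow a b c v : LS \in v -> U_runs a (b + c) (v ++ Upow c) = U_runs a b v.
Proof. by move=> v_S; rewrite /U_runs lead_U_cat // trail_U_cat_Upow eqn_add2r. Qed.

Lemma cnt_U_runs_U3k t k n m : 0 < m ->
  cnt (U_runs 0 (t + 3 * k)) (n + 3 * k) m = cnt (U_runs 0 t) n m.
Proof.
move=> m_gt0; symmetry; apply: (@cnt_bij _ _ _ _ _ _ (fun v => v ++ Upow (3 * k))).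
- move=> x y /(congr1 (fun s => take (size s - 3 * k) s)).
  by rewrite !size_cat size_nseq !addnK !take_size_cat.
- move=> v vW; have v_S := W_nm_memS vW m_gt0.
  by rewrite /= (W_nm_cat_U3k n m k v_S) U_runs_cat_Upow // vW.
move=> w wW; have [y ew] := trail_UP (W_nm_memS wW m_gt0).
move=> /[dup] w_runs /andP[_ /eqP trail_w]; rewrite trail_w in ew.
have v_S : LS \in y ++ LS :: Upow t by rewrite mem_cat mem_head orbT.
have {}ew : w = (y ++ LS :: Upow t) ++ Upow (3 * k) by rewrite ew /Upow nseqD -catA.
exists (y ++ LS :: Upow t) => //.
by rewrite -(W_nm_cat_U3k _ _ k) // -(U_runs_cat_Upow _ _ (3 * k)) // -ew wW.
Qed.

Lemma cnt_U_runs_reduce a b k r N m : 0 < m -> k <= N -> a + b = 3 * k + r ->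
  cnt (U_runs a b) (3 * N) m = cnt (U_runs 0 r) (3 * N - 3 * k) m.
Proof.
move=> m_gt0 le_kN ab; rewrite cnt_U_runs_lead // ab addnC.
by rewrite -[3 * N in LHS](@subnK (3 * k)) ?leq_mul2l // cnt_U_runs_U3k.
Qed.

Lemma cnt_U_runs_S_free r n : cnt (U_runs 0 r) n 0 = 0.
Proof. by rewrite cnt_S_free /U_runs lead_U_Upow; case: n => [|n]; rewrite ?andbF. Qed.

(* With [m != 1] a word has either no letter S or at least two of them. *)
Lemma cnt_form_a_runs n m : m != 1 -> cnt form_a n m = cnt (U_runs 0 0) n m.
Proof.
case: m => [_|[//|m _]].
  by rewrite cnt_U_runs_S_free cnt_eq0_S_free // /form_a framed_Upow.
by apply: eq_cnt => w /W_nmP[_ w_id w_noSS _ w_m]; rewrite form_a_runs ?w_m.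
Qed.

Lemma cnt_form_frak_d_runs n m : m != 1 -> cnt form_frak_d n m = cnt (U_runs 0 2) n m.
Proof.
case: m => [_|[//|m _]].
  by rewrite cnt_U_runs_S_free cnt_eq0_S_free // /form_frak_d framed_Upow.
rewrite -(cnt_U_runs_lead 1 1) //.
by apply: eq_cnt => w /W_nmP[_ _ w_noSS _ w_m]; rewrite form_frak_d_runs ?w_m.
Qed.

Lemma cnt_form_frak_f_runs n m : m != 1 -> cnt form_frak_f n m = cnt (U_runs 0 1) n m.
Proof.
case: m => [_|[//|m _]].
  by rewrite cnt_U_runs_S_free cnt_eq0_S_free // /form_frak_f framed_Upow.
by apply: eq_cnt => w /W_nmP[_ _ w_noSS _ w_m]; rewrite form_frak_f_runs ?w_m.
Qed.

(* For [a, b > 0] the equation [a + b = 3 k + r] has [3 k + r - 1] solutions,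
   all contributing the same count. *)
Lemma cnt_form_UBU r N m : m != 1 -> r < 3 ->
  cnt (form_UBU (fun a b => (a + b) %% 3 == r)) (3 * N) m =
  \sum_(0 <= k < N.+1) (3 * k + r - 1) * cnt (U_runs 0 r) (3 * N - 3 * k) m.
Proof.
move=> m_ne1 r_lt3; have [->|m_gt1] : m = 0 \/ 1 < m by lia.
  by rewrite cnt_eq0_S_free ?form_UBU_Upow // big1 // => k _; rewrite cnt_U_runs_S_free muln0.
have runs w : W_nm (3 * N) m w -> form_UBU (fun a b => (a + b) %% 3 == r) w =
    [&& 0 < lead_U w, 0 < trail_U w & (lead_U w + trail_U w) %% 3 == r].
  by case/W_nmP=> _ _ w_noSS _ w_m; rewrite form_UBU_runs // w_m.
rewrite (@cnt_partition _ (fun w => (lead_U w + trail_U w) %/ 3) 0 N.+1); last first.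
  move=> w wW _; have := lead_trail_U_le_count (W_nm_memS wW (ltnW m_gt1)).
  by case/W_nmP: wW => _ _ _ -> _; lia.
apply: eq_big_nat => k /andP[_ le_kN].
rewrite (@cnt_partition _ lead_U 1 (3 * k + r)); last first.
  by move=> w /runs -> /andP[]; lia.
rewrite -sum_nat_const_nat; apply: eq_big_nat => a /andP[a_ge1 a_lt].
rewrite -(@cnt_U_runs_reduce a (3 * k + r - a)) ?(ltnW m_gt1) //; last by lia.
by apply: eq_cnt => w /runs ->; rewrite /U_runs; lia.
Qed.

(* [0 < 3 * lo + r] excludes [cond 0], so the two sides of the form are
   disjoint. *)
Lemma cnt_form_one_side (cond : nat -> bool) r lo N m : m != 1 -> r < 3 -> 0 < 3 * lo + r ->
  (forall a, cond a = (a %% 3 == r) && (lo <= a %/ 3)) ->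
  cnt (form_one_side cond) (3 * N) m =
  2 * \sum_(lo <= k < N.+1) cnt (U_runs 0 r) (3 * N - 3 * k) m.
Proof.
move=> m_ne1 r_lt3 cond0 condE; have [->|m_gt1] : m = 0 \/ 1 < m by lia.
  by rewrite cnt_eq0_S_free ?form_one_side_Upow // big1 // => k _; rewrite cnt_U_runs_S_free.
have m_gt0 := ltnW m_gt1.
have bound w : W_nm (3 * N) m w -> lead_U w + trail_U w <= 3 * N.
  by move=> wW; have := lead_trail_U_le_count (W_nm_memS wW m_gt0); case/W_nmP: wW => _ _ _ -> _.
have side (x y : word -> nat) : (forall w, W_nm (3 * N) m w -> x w <= 3 * N) ->
    (forall a, cnt (fun w => (x w == a) && (y w == 0)) (3 * N) m = cnt (U_runs 0 a) (3 * N) m) ->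
    cnt (fun w => cond (x w) && (y w == 0)) (3 * N) m =
    \sum_(lo <= k < N.+1) cnt (U_runs 0 r) (3 * N - 3 * k) m.
  move=> x_le x_y; rewrite (@cnt_partition _ (fun w => x w %/ 3) lo N.+1); last first.
    by move=> w /x_le; rewrite condE; lia.
  apply: eq_big_nat => k /andP[le_lo_k le_kN].
  rewrite -(@cnt_U_runs_reduce 0 (3 * k + r)) // -x_y.
  by apply: eq_cnt => w _; rewrite condE; lia.
rewrite (@eq_cnt _ (fun w => (cond (lead_U w) && (trail_U w == 0)) ||
                               (cond (trail_U w) && (lead_U w == 0)))); last first.
  by move=> w /W_nmP[_ _ w_noSS _ w_m]; rewrite form_one_side_runs ?w_m // [(_ == 0) && _]andbC.
rewrite cnt_predU; last first.
  by move=> w _; rewrite !condE; lia.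
rewrite mul2n -addnn; congr (_ + _); apply: side.
- by move=> w /bound; lia.
- by move=> a; rewrite -[a in RHS]addn0 -cnt_U_runs_lead.
- by move=> w /bound; lia.
- by move=> a; apply: eq_cnt => w _; rewrite /U_runs andbC.
Qed.

Lemma W_nm_SxS n m x : W_nm n m.+2 (LS :: LU :: x ++ [:: LU; LS]) = W_nm n m (LU :: x ++ [:: LU]).
Proof.
rewrite /W_nm /inW -[[:: LU; LS]]/([:: LU] ++ [:: LS]) catA -cat_cons is_identity_SxS.
set y := LU :: _; congr [&& [&& _, _ & _], _ & _].
- by rewrite /y /= -catA !noSS_cat_U.
- by rewrite -cat1s !count_cat addn0.
- by rewrite -cat1s !count_cat addn1.
Qed.

Lemma cnt_form_a_UxU n m : cnt form_a n m.+2 = cnt form_UxU n m.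
Proof.
symmetry; apply: (@cnt_bij _ _ _ _ _ _ (fun v => LS :: v ++ [:: LS])).
- by move=> x y [] /eqP; rewrite !cats1 eqseq_rcons andbT => /eqP.
- move=> v vW /framedP[B [B_nil ev]].
  have -> : LS :: v ++ [:: LS] = LS :: LU :: B ++ [:: LU; LS] by rewrite ev /= -catA.
  by rewrite W_nm_SxS -[LU :: _]/([:: LU] ++ B ++ [:: LU]) -ev vW; apply/framedP; exists B.
move=> w wW /framedP[B [B_nil ew]]; exists ([:: LU] ++ B ++ [:: LU]); last by rewrite ew /= -catA.
by rewrite -W_nm_SxS -[LS :: _]/([:: LS; LU] ++ B ++ [:: LU; LS]) -ew wW; apply/framedP; exists B.
Qed.

Lemma cnt_form_UxU_split n m : m != 1 ->
  cnt form_UxU n m = cnt form_b n m + cnt form_d n m + cnt form_e n m.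
Proof.
move=> m_ne1.
have classes w : W_nm n m w ->
    [/\ form_b w = form_UxU w && ((lead_U w + trail_U w) %% 3 == 0),
        form_e w = form_UxU w && ((lead_U w + trail_U w) %% 3 == 1)
      & form_d w = form_UxU w && ((lead_U w + trail_U w) %% 3 == 2)].
  case: m m_ne1 => [_|[//|m _]].
    rewrite W_nm_S_free => /andP[/eqP-> ]; rewrite inW_Upow => /andP[n_gt0 n3].
    rewrite lead_U_Upow trail_U_Upow form_b_Upow /form_d /form_e !form_UBU_Upow form_UxU_Upow.
    by split; lia.
  move=> wW; have w_S := W_nm_memS wW isT; case/W_nmP: wW => _ _ w_noSS _ w_m.
  have w_S2 : 1 < count_mem LS w by rewrite w_m.
  rewrite form_b_UBU // /form_d /form_e !form_UBU_runs // form_UxU_runs //.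
  by rewrite !andbA.
rewrite (@cnt_partition _ (fun w => (lead_U w + trail_U w) %% 3) 0 3); last first.
  by move=> w _ _; rewrite ltn_pmod.
rewrite big_ltn // big_ltn // big_ltn // big_geq // addn0 addnA [in RHS]addnAC.
by congr (_ + _ + _); apply: eq_cnt => w /classes[b_E e_E d_E]; rewrite ?b_E ?e_E ?d_E.
Qed.

Theorem proposition3 (n m : nat) :
  let N : int := Posz (3 * n) in
  let M : int := Posz (2 * m) in
  a_ N M = b_ N (M - 2)%R + d_ N (M - 2)%R + e_ N (M - 2)%R /\
  (0 < m -> b_ N M = \sum_(1 <= k < n.+1) (3 * k - 1) * a_ (N - Posz (3 * k)%N)%R M) /\
  (0 < n -> b_ N 0 = 1) /\
  c_ N M = 2 * \sum_(1 <= k < n.+1) a_ (N - Posz (3 * k)%N)%R M /\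
  d_ N M = \sum_(0 <= k < n.+1) (3 * k + 1) * fd_ (N - Posz (3 * k)%N)%R M /\
  e_ N M = \sum_(1 <= k < n.+1) (3 * k) * ff_ (N - Posz (3 * k)%N)%R M /\
  f_ N M = 2 * \sum_(0 <= k < n.+1) ff_ (N - Posz (3 * k)%N)%R M /\
  g_ N M = 2 * \sum_(0 <= k < n.+1) fd_ (N - Posz (3 * k)%N)%R M.
Proof.
move=> N M; rewrite {}/N {}/M.
have m_ne1 : 2 * m != 1 by lia.
have ext_sub F k : k < n.+1 ->
    ext F (Posz (3 * n) - Posz (3 * k))%R (Posz (2 * m)) = F (3 * n - 3 * k) (2 * m).
  by move=> le_kn; rewrite subzn //; lia.
split; [|split; [|split; [|split; [|split; [|split; [|split]]]]]].
- case: m m_ne1 ext_sub => [|m] _ _.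
    by rewrite /a_ /= cnt_eq0_S_free // /form_a framed_Upow.
  have -> : (Posz (2 * m.+1) - 2)%R = Posz (2 * m) by rewrite mulnS PoszD addrC addKr.
  by rewrite /a_ /b_ /d_ /e_ /= mulnS add2n cnt_form_a_UxU cnt_form_UxU_split //; lia.
- move=> m_gt0; rewrite /b_ /= (@eq_cnt _ (form_UBU (fun a b => (a + b) %% 3 == 0))); last first.
    by move=> w wW; rewrite form_b_UBU // (W_nm_memS wW); lia.
  rewrite cnt_form_UBU // big_ltn // muln0 add0n sub0n mul0n add0n.
  by apply: eq_big_nat => k /andP[_ ?]; rewrite addn0 /a_ ext_sub // cnt_form_a_runs.
- by move=> n_gt0; rewrite /b_ /= cnt_S_free inW_Upow form_b_Upow andbb muln_gt0 n_gt0 modnMr.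
- rewrite /c_ /= (@cnt_form_one_side _ 0 1) // => [|a]; last by lia.
  by congr (_ * _); apply: eq_big_nat => k /andP[_ ?]; rewrite /a_ ext_sub // cnt_form_a_runs.
- rewrite /d_ /= cnt_form_UBU //; apply: eq_big_nat => k /andP[_ ?].
  by rewrite /fd_ ext_sub // cnt_form_frak_d_runs // -addnBA.
- rewrite /e_ /= cnt_form_UBU // big_ltn // muln0 add0n subnn mul0n add0n.
  by apply: eq_big_nat => k /andP[_ ?]; rewrite /ff_ ext_sub // cnt_form_frak_f_runs // addnK.
- rewrite /f_ /= (@cnt_form_one_side _ 1 0) // => [|a]; last by rewrite andbT.
  by congr (_ * _); apply: eq_big_nat => k /andP[_ ?]; rewrite /ff_ ext_sub // cnt_form_frak_f_runs.
- rewrite /g_ /= (@cnt_form_one_side _ 2 0) // => [|a]; last by rewrite andbT.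
  by congr (_ * _); apply: eq_big_nat => k /andP[_ ?]; rewrite /fd_ ext_sub // cnt_form_frak_d_runs.
Qed.
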